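(* The Clebsch graph has odd girth $5$, and it admits an orientation in which every $5$-cycle is alternating.
   Context: The Clebsch graph (Greenwood–Gleason graph) is the $5$-regular graph on vertex set $\{0,1\}^4$ in which two vectors are adjacent iff they differ in exactly one coordinate or in all four coordinates. The odd girth is the length of a shortest odd cycle. An orientation assigns each edge exactly one direction. In an oriented graph, a subgraph that is a cycle is called alternating if at most one of its vertices has both positive in-degree and positive out-degree within that cycle. *)

From mathcomp Require Import all_boot.
Set Implicit Arguments. Unset Strict Implicit. Unset Printing Implicit Defensive.

Definition V := {ffun 'I_4 -> bool}.

Definition hdist (u v : V) : nat := #|[set i | u i != v i]|.

Definition clebsch : rel V := fun u v => (hdist u v == 1) || (hdist u v == 4).

Definition is_cycle (T : eqType) (adj : rel T) (c : seq T) : Prop :=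
  [/\ 3 <= size c, uniq c & cycle adj c].

Definition odd_girth (T : eqType) (adj : rel T) (k : nat) : Prop :=
  (exists c, [/\ is_cycle adj c, odd (size c) & size c = k]) /\
  (forall c, is_cycle adj c -> odd (size c) -> k <= size c).

Definition orientation (T : eqType) (adj : rel T) (o : rel T) : Prop :=
  (forall u v, o u v -> adj u v) /\
  (forall u v, adj u v -> (o u v (+) o v u)).

(* Within the cycle c, vertex x has positive in-degree and positive out-degree
   (its cycle-neighbours are prev c x and next c x). *)
Definition mixed_in (T : eqType) (o : rel T) (c : seq T) (x : T) : bool :=
  (o (prev c x) x || o (next c x) x) && (o x (prev c x) || o x (next c x)).

Definition alternating (T : eqType) (o : rel T) (c : seq T) : Prop :=
  count (mixed_in o c) c <= 1.

From mathcomp Require Import all_boot.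

(* Encoding {0,1}^4 as boolean quadruples makes every question about the
   Clebsch graph decidable by evaluation.  The graph has no triangle but has a
   5-cycle, so its odd girth is 5.  Orient each edge upwards along a height
   function with four values that is injective on edges, the sources being the
   even-weight vertices with first bit 0 and the sinks the even-weight vertices
   with first bit 1.  A vertex of a cycle is then mixed exactly when it is
   neither a local minimum nor a local maximum of the height, and enumerating
   the closed walks of length 5 shows that every 5-cycle has at most one such
   vertex. *)

Set Implicit Arguments.
Unset Strict Implicit.
Unset Printing Implicit Defensive.

Section GraphIsomorphism.

Variables (T U : eqType) (f : T -> U) (g : U -> T).
Hypotheses (fK : cancel f g) (gK : cancel g f).
Variables (adjT : rel T) (adjU : rel U).
Hypothesis f_adj : {mono f : x y / adjT x y >-> adjU x y}.

Let f_inj : injective f := can_inj fK.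

Lemma is_cycle_map c : is_cycle adjU (map f c) = is_cycle adjT c.
Proof. by rewrite /is_cycle size_map (map_inj_uniq f_inj) (mono_cycle f_adj). Qed.

Lemma odd_girth_mono k : odd_girth adjU k -> odd_girth adjT k.
Proof.
case=> [[c [c_cycle c_odd c_k]] c_min]; split=> [|d].
  by exists (map g c); rewrite -is_cycle_map mapK // size_map.
rewrite -is_cycle_map -(size_map f); exact: c_min.
Qed.

Variables (oT : rel T) (oU : rel U).
Hypothesis f_o : {mono f : x y / oT x y >-> oU x y}.

Lemma orientation_mono : orientation adjU oU -> orientation adjT oT.
Proof.
case=> o_adj o_xor; split=> x y; rewrite -f_adj -!f_o; [exact: o_adj | exact: o_xor].
Qed.

Lemma alternating_map c : uniq c -> alternating oU (map f c) = alternating oT c.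
Proof.
move=> c_uniq; rewrite /alternating count_map; congr (is_true (_ <= 1)).
apply: eq_count => x; rewrite /= /mixed_in.
by rewrite (next_map f_inj c_uniq) (prev_map f_inj c_uniq) !f_o.
Qed.

End GraphIsomorphism.

Section HeightOrientation.

Variables (T : eqType) (adj : rel T) (h : T -> nat).

Definition height_orientation : rel T := [rel u v | adj u v && (h u < h v)].

Lemma orientation_height :
  symmetric adj -> (forall u v, adj u v -> h u != h v) ->
  orientation adj height_orientation.
Proof.
move=> adj_sym h_adj; split=> [u v /andP [] // | u v uv].
rewrite /height_orientation /= -(adj_sym u v) uv /=.
by case: ltngtP (h_adj u v uv) => // ->; rewrite eqxx.
Qed.

End HeightOrientation.

Lemma triangle_free_odd_girth5 (T : eqType) (adj : rel T) (c5 : seq T) :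
  (forall c, size c = 3 -> ~~ cycle adj c) -> is_cycle adj c5 -> size c5 = 5 ->
  odd_girth adj 5.
Proof.
move=> no_triangle c5_cycle c5_size; split; first by exists c5; rewrite c5_size.
case=> [|x [|y [|z [|w [|v s]]]]] [] //= _ _ c_cycle _.
by have /negP := no_triangle [:: x; y; z] erefl.
Qed.

Section Walks.

Variables (T : eqType) (e : rel T) (s : seq T).

Fixpoint walks n : seq (seq T) :=
  if n is n'.+1 then [seq x :: p | x <- s, p <- [seq p <- walks n' | path e x p]]
  else [:: [::]].

Hypothesis s_full : forall x, x \in s.

Lemma mem_walks p : sorted e p -> p \in walks (size p).
Proof.
elim: p => [|x p IHp] //= xp.
apply: (allpairs_f_dep (fun x p => x :: p)) => //.
by rewrite mem_filter xp IHp ?(path_sorted xp).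
Qed.

Lemma cycle_walks (P : pred (seq T)) n :
  all (fun c => cycle e c ==> P c) (walks n) ->
  forall c, size c = n -> cycle e c -> P c.
Proof.
move=> /allP walks_P c c_size c_cycle; apply: (implyP (walks_P c _)) => //.
rewrite -c_size; apply: mem_walks; case: c {c_size} c_cycle => //= x p.
by rewrite rcons_path => /andP [].
Qed.

End Walks.

Definition B4 := (bool * bool * bool * bool)%type.

Definition bits (u : V) : B4 := (u ord0, u (inord 1), u (inord 2), u (inord 3)).

Definition of_bits (x : B4) : V :=
  let: (x0, x1, x2, x3) := x in [ffun i : 'I_4 => nth false [:: x0; x1; x2; x3] i].

Lemma bitsK : cancel bits of_bits.
Proof.
move=> u; apply/ffunP=> -[[|[|[|[|i]]]] lt_i4] //; rewrite ffunE /=; congr (u _);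
  by apply: val_inj; rewrite /= ?inordK.
Qed.

Lemma of_bitsK : cancel of_bits bits.
Proof. by case=> [[[x0 x1] x2] x3]; rewrite /bits !ffunE /= !inordK. Qed.

Definition bdist (x y : B4) : nat :=
  let: (x0, x1, x2, x3) := x in let: (y0, y1, y2, y3) := y in
  (x0 != y0) + (x1 != y1) + (x2 != y2) + (x3 != y3).

Lemma hdist_bits u v : hdist u v = bdist (bits u) (bits v).
Proof.
rewrite /hdist -sum1_card big_mkcond !big_ord_recr big_ord0 /= !inE add0n.
congr (_ + _ + _ + _); congr (nat_of_bool (u _ != v _));
  by apply: val_inj; rewrite /= ?inordK.
Qed.

Definition clebsch4 : rel B4 := fun x y => (bdist x y == 1) || (bdist x y == 4).

Lemma clebsch_bits : {mono bits : u v / clebsch u v >-> clebsch4 u v}.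
Proof. by move=> u v; rewrite /clebsch hdist_bits. Qed.

Definition B4_enum : seq B4 :=
  let bs := [:: false; true] in
  let bs2 := [seq (b0, b1) | b0 <- bs, b1 <- bs] in
  [seq (x, b) | x <- [seq (x, b) | x <- bs2, b <- bs], b <- bs].

Lemma mem_B4_enum x : x \in B4_enum.
Proof. by case: x => [[[[] []] []] []]. Qed.

Lemma clebsch4_sym : symmetric clebsch4.
Proof. by do 2!case=> [[[[] []] []] []]. Qed.

Definition height (x : B4) : nat :=
  let: (x0, x1, x2, x3) := x in
  if x0 (+) x1 (+) x2 (+) x3 then (if x0 then 1 else 2) else (if x0 then 3 else 0).

Lemma height_clebsch4 x y : clebsch4 x y -> height x != height y.
Proof. by move: x y; do 2!case=> [[[[] []] []] []]. Qed.

Definition clebsch4_orientation := height_orientation clebsch4 height.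

Lemma clebsch4_no_triangle c : size c = 3 -> ~~ cycle clebsch4 c.
Proof.
move=> c_size; apply/negP=> c_cycle.
have checked : all (fun c => cycle clebsch4 c ==> false) (walks clebsch4 B4_enum 3).
  by vm_compute.
by have := cycle_walks mem_B4_enum checked c_size c_cycle.
Qed.

Lemma clebsch4_pentagon :
  is_cycle clebsch4 [:: (false, false, false, false); (true, false, false, false);
    (true, true, false, false); (true, true, true, false); (true, true, true, true)].
Proof. by []. Qed.

Lemma clebsch4_pentagons_alternating c :
  is_cycle clebsch4 c -> size c = 5 -> alternating clebsch4_orientation c.
Proof.
case=> _ c_uniq c_cycle c_size.
pose P c := uniq c ==> (count (mixed_in clebsch4_orientation c) c <= 1).
have checked : all (fun c => cycle clebsch4 c ==> P c) (walks clebsch4 B4_enum 5).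
  by vm_compute.
by move/implyP: (cycle_walks mem_B4_enum checked c_size c_cycle); apply.
Qed.

Theorem mainTheorem12 :
  odd_girth clebsch 5 /\
  exists o : rel V, orientation clebsch o /\
    forall c : seq V, is_cycle clebsch c -> size c = 5 -> alternating o c.
Proof.
split.
  apply: (odd_girth_mono bitsK of_bitsK clebsch_bits).
  exact: triangle_free_odd_girth5 clebsch4_no_triangle clebsch4_pentagon _.
exists (relpre bits clebsch4_orientation).
have bits_o : {mono bits : u v / relpre bits clebsch4_orientation u v >->
                                  clebsch4_orientation u v} by [].
split.
  apply: (orientation_mono clebsch_bits bits_o).
  exact: orientation_height clebsch4_sym height_clebsch4.
move=> c c_cycle c_size; have [_ c_uniq _] := c_cycle.
rewrite -(alternating_map bitsK bits_o c_uniq).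
apply: clebsch4_pentagons_alternating; last by rewrite size_map.
by rewrite (is_cycle_map bitsK clebsch_bits).
Qed.
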